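(* Let $W,V$ be B-DMCs on a common output alphabet. Let $B_1,B_2,\dots$ be i.i.d. uniform on $\{-,+\}$, set $i_0=1$ and $i_{n}=2i_{n-1}-1$ if $B_n=-$, $i_n=2i_{n-1}$ if $B_n=+$, and let $X_n=\mathbb P_W\big[L_{V_{2^n}^{(i_n)}}(y_1^{2^n})=1\big]$. Then $(X_n)_{n\ge0}$ is a submartingale with respect to the filtration generated by $B_1,B_2,\dots$, taking values in $[0,1]$; it converges almost surely, and its almost sure limit takes values in $\{0,1\}$.
   Context: A B-DMC $W:\{0,1\}\to\mathcal Y$ is given by transition probabilities $W(y|x)$, $\mathcal Y$ finite; $L_W(y)=W(y|1)/W(y|0)$. For a B-DMC $W$: $W^-(y_1y_2|u_1)=\sum_{u_2}\tfrac12W(y_1|u_1\oplus u_2)W(y_2|u_2)$, $W^+(y_1y_2u_1|u_2)=\tfrac12W(y_1|u_1\oplus u_2)W(y_2|u_2)$. Synthetic channels: $W_1^{(1)}=W$, $W_{2N}^{(2i-1)}=(W_N^{(i)})^-$, $W_{2N}^{(2i)}=(W_N^{(i)})^+$; an output of $W_N^{(i)}$ is written $(y_1^N,u_1^{i-1})$ as in Arıkan's construction, and $L_{V_N^{(i)}}(y_1^N):=L_{V_N^{(i)}}(y_1^N,0_1^{i-1})$. These satisfy, with $L_1=L_{V_N^{(i)}}(y_1^N)$, $L_2=L_{V_N^{(i)}}(y_{N+1}^{2N})$: $L_{V_{2N}^{(2i-1)}}(y_1^{2N})=\frac{L_1+L_2}{1+L_1L_2}$, $L_{V_{2N}^{(2i)}}(y_1^{2N})=L_1L_2$.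 Notation: $W(y_1^N|0_1^N)=\prod_{j}W(y_j|0)$ and $\mathbb P_W[E]=\sum_{y_1^N}W(y_1^N|0_1^N)\mathbf 1\{E\}$. *)

From Stdlib Require Import Reals.
From mathcomp Require Import all_boot.
Set Implicit Arguments.
Unset Strict Implicit.
Unset Printing Implicit Defensive.

Local Open Scope R_scope.

(* Conventions: a channel is W : bool -> Y -> R with W x y = W(y|x);
   input bit false = 0, true = 1.  Branch bit false = '-', true = '+'. *)

Definition is_BDMC (Y : finType) (W : bool -> Y -> R) : Prop :=
  (forall x y, 0 <= W x y) /\ (forall x, \big[Rplus/0]_(y : Y) W x y = 1).

(* W^-(y1 y2 | u1) = sum_{u2} 1/2 W(y1|u1 xor u2) W(y2|u2) *)
Definition ch_minus (O : Type) (C : bool -> O -> R) : bool -> (O * O)%type -> R :=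
  fun u1 o => / 2 * C (xorb u1 false) o.1 * C false o.2
            + / 2 * C (xorb u1 true) o.1 * C true o.2.

(* W^+(y1 y2 u1 | u2) = 1/2 W(y1|u1 xor u2) W(y2|u2) *)
Definition ch_plus (O : Type) (C : bool -> O -> R) : bool -> (O * O * bool)%type -> R :=
  fun u2 o => / 2 * C (xorb o.2 u2) o.1.1 * C u2 o.1.2.

(* Output alphabet of the synthetic channel.  The branch list rs is given in
   REVERSE order: rs = [:: B_n; ...; B_1]  (head = last applied transform). *)
Fixpoint Out (Y : Type) (rs : seq bool) : Type :=
  match rs with
  | [::] => Y
  | b :: rs' => if b then (Out Y rs' * Out Y rs' * bool)%type
                else (Out Y rs' * Out Y rs')%type
  end.

(* synth W [:: B_n; ...; B_1] = W_{2^n}^{(i_n)} = (...(W^{B_1})...)^{B_n} *)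
Fixpoint synth (Y : Type) (W : bool -> Y -> R) (rs : seq bool)
  : bool -> Out Y rs -> R :=
  match rs as rs0 return bool -> Out Y rs0 -> R with
  | [::] => W
  | b :: rs' =>
      if b as b0 return bool -> Out Y (b0 :: rs') -> R
      then ch_plus (@synth Y W rs') else ch_minus (@synth Y W rs')
  end.

(* pw n = 2^n (defined so that pw (n+1) = pw n + pw n definitionally). *)
Fixpoint pw (n : nat) : nat :=
  match n with 0 => 1%N | S m => (pw m + pw m)%N end.

(* The synthetic-channel output (y_1^N, 0_1^{i-1}) built from y_1^N, N = 2^n:
   first half of y feeds the first copy, second half the second copy, and all
   previously decided bits u are 0. *)
Fixpoint emb (Y : Type) (rs : seq bool) : ('I_(pw (size rs)) -> Y) -> Out Y rs :=
  match rs as rs0 return ('I_(pw (size rs0)) -> Y) -> Out Y rs0 with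
  | [::] => fun g => g ord0
  | b :: rs' => fun g =>
      let l := @emb Y rs' (fun i => g (lshift (pw (size rs')) i)) in
      let r := @emb Y rs' (fun i => g (rshift (pw (size rs')) i)) in
      if b as b0 return Out Y (b0 :: rs') then (l, r, false) else (l, r)
  end.

(* X for the branch [:: B_n; ...; B_1]:
   P_W[ L_{V_{2^n}^{(i_n)}}(y_1^{2^n}) = 1 ]
   = sum_{y in Y^N} prod_j W(y_j|0) * 1{ V(y,0|1) = V(y,0|0) }.
   The event L = 1 is read as V(.|1) = V(.|0) (cross-multiplied form). *)
Definition Xr (Y : finType) (W V : bool -> Y -> R) (rs : seq bool) : R :=
  \big[Rplus/0]_(y : {ffun 'I_(pw (size rs)) -> Y})
     ((\big[Rmult/1]_(j : 'I_(pw (size rs))) W false (y j)) *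
      (if Req_EM_T (@synth Y V rs true (@emb Y rs y)) (@synth Y V rs false (@emb Y rs y))
       then 1 else 0)).

(* Sample path: omega k = B_{k+1}.  revpre omega n = [:: B_n; ...; B_1]. *)
Fixpoint revpre (omega : nat -> bool) (n : nat) : seq bool :=
  match n with 0 => [::] | S m => omega m :: revpre omega m end.

Definition extends (omega : nat -> bool) (p : seq bool) : Prop :=
  forall k, (k < size p)%N -> omega k = nth false p k.

(* Null set for the i.i.d. uniform (fair coin) product measure on {-,+}^N:
   coverable by countably many cylinders of total measure <= eps, any eps>0. *)
Definition coin_null (A : (nat -> bool) -> Prop) : Prop :=
  forall eps, 0 < eps ->
    exists c : nat -> seq bool,
      (forall omega, A omega -> exists k, extends omega (c k)) /\
      (forall K, sum_f_R0 (fun k => pow (/ 2) (size (c k))) K <= eps).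

Definition almost_surely (P : (nat -> bool) -> Prop) : Prop :=
  coin_null (fun omega => ~ P omega).

(* Write X(rs) for the value of X at the branch word rs = [:: B_n; ...; B_1].
   1. Channel recursion.  The event L = 1 is the "tie" V(o|1) = V(o|0).  Under
      the minus transform a pair of outputs ties iff one of its halves ties,
      and under the plus transform two ties give a tie.  Since the two halves
      of y_1^{2N} are independent under W^{2N}(.|0), this yields
        X(- :: rs) = 2 X(rs) - X(rs)^2   and   X(rs)^2 <= X(+ :: rs),
      so X takes values in [0,1] and is a submartingale.
   2. Deterministic lemma.  A [0,1]-valued sequence whose squared steps and
      squared x(1-x) are dominated by a summable sequence converges to 0 or 1.
   3. Lyapunov argument.  For Phi = X + X^2 the conditional drift d of Phi
      dominates both squared steps and (via the minus identity) (X(1-X))^2.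
      A stopped-martingale (Markov) bound shows that the accumulated drift
      along the path exceeds K with probability <= 2/K; outside that event
      step 2 applies.
   4. Null sets.  The paths that ever reach a set of nodes H are covered by
      cylinders of total mass at most sup_m P[H reached by time m] + eps;
      this turns the bound of step 3 into the required a.s. statement. *)

From HB Require Import structures.
From Stdlib Require Import Reals Lra Lia Classical.
From mathcomp Require Import all_boot zify.
Set Implicit Arguments.
Unset Strict Implicit.
Local Open Scope R_scope.

Lemma RplusA : associative Rplus. Proof. by move=> x y z; rewrite Rplus_assoc. Qed.
Lemma RmultA : associative Rmult. Proof. by move=> x y z; rewrite Rmult_assoc. Qed.
HB.instance Definition _ := Monoid.isComLaw.Build R 0 Rplus RplusA Rplus_comm Rplus_0_l.
HB.instance Definition _ := Monoid.isComLaw.Build R 1 Rmult RmultA Rmult_comm Rmult_1_l.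
HB.instance Definition _ := Monoid.isMulLaw.Build R 0 Rmult Rmult_0_l Rmult_0_r.
HB.instance Definition _ :=
  Monoid.isAddLaw.Build R Rmult Rplus Rmult_plus_distr_r Rmult_plus_distr_l.

Definition tie (O : Type) (C : bool -> O -> R) (o : O) : R :=
  if Req_EM_T (C true o) (C false o) then 1 else 0.

Lemma tie_01 (O : Type) (C : bool -> O -> R) o : 0 <= tie C o <= 1.
Proof. rewrite /tie; destruct (Req_EM_T (C true o) (C false o)); simpl; lra. Qed.

Lemma tie_minus (O : Type) (C : bool -> O -> R) o1 o2 :
  tie (ch_minus C) (o1, o2) = 1 - (1 - tie C o1) * (1 - tie C o2).
Proof.
rewrite /tie /ch_minus /=.
have key : / 2 * C true o1 * C false o2 + / 2 * C false o1 * C true o2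
         - (/ 2 * C false o1 * C false o2 + / 2 * C true o1 * C true o2)
         = / 2 * (C true o1 - C false o1) * (C false o2 - C true o2) by ring.
destruct (Req_EM_T (C true o1) _) as [e1|e1];
destruct (Req_EM_T (C true o2) _) as [e2|e2];
destruct (Req_EM_T _ _) as [e|e]; simpl; try lra; exfalso.
1-3: by apply: e; apply: Rminus_diag_uniq; rewrite key; first [rewrite e1 | rewrite e2]; ring.
- have /Rmult_integral [/Rmult_integral [|]|] : / 2 * (C true o1 - C false o1) *
      (C false o2 - C true o2) = 0 by rewrite -key e; ring.
  + by have := Rinv_neq_0_compat 2 ltac:(lra).
  + by move=> h; apply: e1; lra.
  + by move=> h; apply: e2; lra.
Qed.

Lemma tie_plus (O : Type) (C : bool -> O -> R) o1 o2 :
  tie C o1 * tie C o2 <= tie (ch_plus C) (o1, o2, false).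
Proof.
have := tie_01 (ch_plus C) (o1, o2, false).
rewrite /tie /ch_plus /=.
destruct (Req_EM_T (C true o1) _) as [e1|e1];
destruct (Req_EM_T (C true o2) _) as [e2|e2];
destruct (Req_EM_T _ _) as [e|e]; simpl; try lra.
by exfalso; apply: e; rewrite e1 e2.
Qed.

Section Expectation.
Variables (Y : finType) (W : bool -> Y -> R).
Hypothesis hW : is_BDMC W.

Definition word_prob N (y : {ffun 'I_N -> Y}) : R :=
  \big[Rmult/1]_(j : 'I_N) W false (y j).

Definition expect N (f : {ffun 'I_N -> Y} -> R) : R :=
  \big[Rplus/0]_(y : {ffun 'I_N -> Y}) (word_prob y * f y).

Lemma word_prob_ge0 N (y : {ffun 'I_N -> Y}) : 0 <= word_prob y.
Proof.
apply: (big_ind (fun x => 0 <= x)); [lra | exact: Rmult_le_pos |].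
by move=> j _; case: hW.
Qed.

Lemma expect_cst N c : expect (N := N) (fun _ => c) = c.
Proof.
rewrite /expect -big_distrl /= /word_prob.
rewrite -(bigA_distr_bigA (fun (_ : 'I_N) (z : Y) => W false z)) /=.
rewrite (eq_bigr (fun _ => 1)) ?big1_eq ?Rmult_1_l //.
by move=> j _; case: hW.
Qed.

Lemma expect_ext N (f g : {ffun 'I_N -> Y} -> R) :
  (forall y, f y = g y) -> expect f = expect g.
Proof. by move=> e; apply: eq_bigr => y _; rewrite e. Qed.

Lemma expect_le N (f g : {ffun 'I_N -> Y} -> R) :
  (forall y, f y <= g y) -> expect f <= expect g.
Proof.
move=> hfg; apply: (big_ind2 (fun a b => a <= b)); [lra | move=> *; lra |].
by move=> y _; apply: Rmult_le_compat_l; [exact: word_prob_ge0 | exact: hfg].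
Qed.

Lemma expect_compl N (f : {ffun 'I_N -> Y} -> R) :
  expect (fun y => 1 - f y) = 1 - expect f.
Proof.
rewrite -{2}(expect_cst N 1) /expect /Rminus.
rewrite (big_morph Ropp Ropp_plus_distr Ropp_0) -big_split /=.
by apply: eq_bigr => y _; ring.
Qed.

Definition lhalf N (y : {ffun 'I_(N + N) -> Y}) : {ffun 'I_N -> Y} :=
  [ffun i => y (lshift N i)].
Definition rhalf N (y : {ffun 'I_(N + N) -> Y}) : {ffun 'I_N -> Y} :=
  [ffun i => y (rshift N i)].
Definition glue N (y1 y2 : {ffun 'I_N -> Y}) : {ffun 'I_(N + N) -> Y} :=
  [ffun j => match split j with inl i => y1 i | inr i => y2 i end].

Lemma glue_lshift N (y1 y2 : {ffun 'I_N -> Y}) i : glue y1 y2 (lshift N i) = y1 i.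
Proof. by rewrite ffunE (unsplitK (inl _ i)). Qed.

Lemma glue_rshift N (y1 y2 : {ffun 'I_N -> Y}) i : glue y1 y2 (rshift N i) = y2 i.
Proof. by rewrite ffunE (unsplitK (inr _ i)). Qed.

Lemma lhalf_glue N (y1 y2 : {ffun 'I_N -> Y}) : lhalf (glue y1 y2) = y1.
Proof. by apply/ffunP => i; rewrite ffunE glue_lshift. Qed.

Lemma rhalf_glue N (y1 y2 : {ffun 'I_N -> Y}) : rhalf (glue y1 y2) = y2.
Proof. by apply/ffunP => i; rewrite ffunE glue_rshift. Qed.

Lemma glue_halves N (y : {ffun 'I_(N + N) -> Y}) : glue (lhalf y) (rhalf y) = y.
Proof.
apply/ffunP => j; rewrite ffunE -[in RHS](splitK j).
by case: (split j) => i /=; rewrite ffunE.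
Qed.

Lemma word_prob_glue N (y1 y2 : {ffun 'I_N -> Y}) :
  word_prob (glue y1 y2) = word_prob y1 * word_prob y2.
Proof.
rewrite /word_prob big_split_ord /=.
by congr Rmult; apply: eq_bigr => i _; rewrite ?glue_lshift ?glue_rshift.
Qed.

Lemma expect_halves N (f g : {ffun 'I_N -> Y} -> R) :
  expect (fun y : {ffun 'I_(N + N) -> Y} => f (lhalf y) * g (rhalf y)) =
  expect f * expect g.
Proof.
rewrite /expect (reindex (fun p : {ffun 'I_N -> Y} * {ffun 'I_N -> Y} => glue p.1 p.2)) /=.
  under eq_bigr => p _ do rewrite word_prob_glue lhalf_glue rhalf_glue.
  rewrite -(pair_bigA _ (fun y1 y2 => word_prob y1 * word_prob y2 * (f y1 * g y2))) /=.
  rewrite big_distrl /=; apply: eq_bigr => y1 _.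
  rewrite big_distrr /=; apply: eq_bigr => y2 _; ring.
exists (fun y => (lhalf y, rhalf y)) => [[y1 y2] _ | y _] /=.
  by rewrite lhalf_glue rhalf_glue.
exact: glue_halves.
Qed.

End Expectation.

Lemma emb_ext (Y : Type) rs (g g' : 'I_(pw (size rs)) -> Y) :
  g =1 g' -> @emb Y rs g = @emb Y rs g'.
Proof.
elim: rs g g' => [|b rs IH] g g' e /=; first by rewrite e.
by rewrite (IH _ _ (fun i => e _)) (IH _ (fun i => g' (rshift _ i)) (fun i => e _)).
Qed.

Section SyntheticChannels.
Variables (Y : finType) (W V : bool -> Y -> R).
Hypothesis hW : is_BDMC W.

Lemma Xr_expect rs : Xr W V rs = expect W (fun y => tie (@synth Y V rs) (@emb Y rs y)).
Proof. by []. Qed.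

Lemma emb_minus rs (y : {ffun 'I_(pw (size rs) + pw (size rs)) -> Y}) :
  @emb Y (false :: rs) y = (@emb Y rs (lhalf y), @emb Y rs (rhalf y)).
Proof. by congr pair; apply: emb_ext => i; rewrite ffunE. Qed.

Lemma emb_plus rs (y : {ffun 'I_(pw (size rs) + pw (size rs)) -> Y}) :
  @emb Y (true :: rs) y = (@emb Y rs (lhalf y), @emb Y rs (rhalf y), false).
Proof. by congr (pair (pair _ _) _); apply: emb_ext => i; rewrite ffunE. Qed.

Lemma Xr_01 rs : 0 <= Xr W V rs <= 1.
Proof.
rewrite Xr_expect -{1}(expect_cst hW (pw (size rs)) 0) -(expect_cst hW (pw (size rs)) 1).
by split; apply: (expect_le hW) => y; case: (tie_01 (@synth Y V rs) (@emb Y rs y)).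
Qed.

(* The minus branch: P[tie] = 1 - (1 - X)^2. *)
Lemma Xr_minus rs : Xr W V (false :: rs) = 2 * Xr W V rs - Xr W V rs * Xr W V rs.
Proof.
set t := fun y : {ffun 'I_(pw (size rs)) -> Y} => 1 - tie (@synth Y V rs) (@emb Y rs y).
have -> : Xr W V (false :: rs) =
          expect W (fun y => 1 - t (lhalf y) * t (rhalf y)).
  by rewrite Xr_expect; apply: expect_ext => y; rewrite emb_minus tie_minus.
by rewrite (expect_compl hW) expect_halves Xr_expect (expect_compl hW); ring.
Qed.

Lemma Xr_plus rs : Xr W V rs * Xr W V rs <= Xr W V (true :: rs).
Proof.
rewrite !Xr_expect -expect_halves; apply: (expect_le hW) => y.
by rewrite emb_plus; apply: tie_plus.
Qed.

End SyntheticChannels.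

Lemma summable_terms_vanish (e : nat -> R) (B : R) :
  (forall n, 0 <= e n) -> (forall n, sum_f_R0 e n <= B) ->
  forall eps, 0 < eps -> exists N, forall n, (N <= n)%coq_nat -> e n < eps.
Proof.
move=> e_ge0 e_sum eps eps_gt0.
have grow : Un_growing (sum_f_R0 e) by move=> n /=; have := e_ge0 n.+1; lra.
have ub : has_ub (sum_f_R0 e) by exists B => _ [n ->]; apply: e_sum.
have [N cauchy] := CV_Cauchy _ (growing_cv _ grow ub) eps eps_gt0.
exists N.+1 => -[|n] lt_n; first lia.
have := cauchy n.+1 n ltac:(lia) ltac:(lia); rewrite /Rdist /=.
by rewrite Rabs_right; have := e_ge0 n.+1; lra.
Qed.

Section ZeroOneLimit.
Variables (x e : nat -> R).
Hypothesis x01 : forall n, 0 <= x n <= 1.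
Hypothesis step_small : forall n, (x n.+1 - x n) ^ 2 <= 2 * e n.
Hypothesis polar_small : forall n, (x n * (1 - x n)) ^ 2 <= 2 * e n.
Hypothesis e_vanish :
  forall eps, 0 < eps -> exists N, forall n, (N <= n)%coq_nat -> e n < eps.

(* Once e is small, x cannot jump over the middle: below 1/4 it stays below 1/4,
   since a step is < 1/8 while x (1 - x) < 1/16 excludes [1/4, 3/8]. *)
Lemma trapped_low N : (forall n, (N <= n)%coq_nat -> e n < / 512) ->
  x N < / 4 -> forall k, x (N + k)%coq_nat < / 4.
Proof.
move=> e_tiny xN; elim=> [|k IH]; first by rewrite Nat.add_0_r.
rewrite -Nat.add_succ_comm /=.
have := step_small (N + k)%coq_nat; have := polar_small (N + k).+1.
have := e_tiny (N + k)%coq_nat ltac:(lia); have := e_tiny (N + k).+1 ltac:(lia).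
have := x01 (N + k)%coq_nat; have := x01 (N + k).+1.
move: IH; set a := x (N + k)%coq_nat; set b := x (N + k).+1 => *.
have : b - a < / 8 by nra.
nra.
Qed.

(* Trapped below 1/4, x (1 - x) >= 3 x / 4 -> 0 forces x -> 0. *)
Lemma low_limit N : (forall n, (N <= n)%coq_nat -> e n < / 512) ->
  x N < / 4 -> Un_cv x 0.
Proof.
move=> e_tiny xN eps eps_gt0.
pose d := Rmin eps (/ 2).
have d_gt0 : 0 < d by apply: Rmin_pos; lra.
have [N1 HN1] := @e_vanish (d * d / 4) ltac:(nra).
exists (N + N1)%coq_nat => n le_n; rewrite /Rdist Rminus_0_r.
have [k ?] : exists k, n = (N + k)%coq_nat by exists (n - N)%coq_nat; lia.
subst n.
have := trapped_low e_tiny xN k; have := x01 (N + k)%coq_nat.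
have := polar_small (N + k)%coq_nat; have := HN1 (N + k)%coq_nat ltac:(lia).
have := Rmin_l eps (/ 2); rewrite -/d.
set a := x (N + k)%coq_nat => *.
rewrite Rabs_right; last lra.
have : a * (3 / 4) <= a * (1 - a) by nra.
nra.
Qed.

End ZeroOneLimit.

(* With e summable, x converges to 0 or 1 (apply the above to x or to 1 - x). *)
Lemma zero_one_limit (x e : nat -> R) (B : R) :
  (forall n, 0 <= x n <= 1) ->
  (forall n, 0 <= e n) ->
  (forall n, (x n.+1 - x n) ^ 2 <= 2 * e n) ->
  (forall n, (x n * (1 - x n)) ^ 2 <= 2 * e n) ->
  (forall n, sum_f_R0 e n <= B) ->
  exists l, Un_cv x l /\ (l = 0 \/ l = 1).
Proof.
move=> x01 e_ge0 step polar e_sum.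
have e_vanish := summable_terms_vanish e_ge0 e_sum.
have [N e_tiny] := e_vanish (/ 512) ltac:(lra).
have [low|high] : x N < / 4 \/ 1 - x N < / 4.
  have := polar N; have := e_tiny N (le_n _); have := x01 N.
  case: (Rlt_or_le (x N) (/ 4)) => ? *; [left | right]; nra.
- by exists 0; split; [exact: low_limit e_tiny low | left].
- exists 1; split; last by right.
  have y01 : forall n, 0 <= 1 - x n <= 1 by move=> n; have := x01 n; lra.
  have ystep : forall n, (1 - x n.+1 - (1 - x n)) ^ 2 <= 2 * e n.
    by move=> n; apply: Rle_trans (step n); right; ring.
  have ypolar : forall n, ((1 - x n) * (1 - (1 - x n))) ^ 2 <= 2 * e n.
    by move=> n; apply: Rle_trans (polar n); right; ring.
  move=> eps /(low_limit y01 ystep ypolar e_vanish e_tiny high) [M HM].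
  exists M => n /HM; rewrite /Rdist.
  by rewrite (_ : 1 - x n - 0 = - (x n - 1)) ?Rabs_Ropp; last ring.
Qed.

Lemma sum_f_R0_mono (f : nat -> R) m n :
  (forall i, 0 <= f i) -> (m <= n)%N -> sum_f_R0 f m <= sum_f_R0 f n.
Proof.
move=> f_ge0; rewrite leq_eqVlt => /orP [/eqP -> | /ltP lt_mn]; first lra.
rewrite (tech2 f m n lt_mn) -{1}[sum_f_R0 f m]Rplus_0_r.
by apply: Rplus_le_compat_l; apply: cond_pos_sum.
Qed.

Lemma sum_indicator n c q :
  sum_f_R0 (fun i => if (i < c)%N then q else 0) n = INR (minn n.+1 c) * q.
Proof.
elim: n => [|n IH].
  by case: c => [|c]; [rewrite minn0 /=; lra | rewrite (_ : minn 1 c.+1 = 1%N) /=; [lra | lia]].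
rewrite /= IH; case: (ltnP n.+1 c) => h.
  by rewrite (_ : minn n.+2 c = n.+2) ?[INR n.+2]S_INR; [ring | lia].
by rewrite (_ : minn n.+2 c = c); [ring | lia].
Qed.

(* Block layout of nat: block m consists of the 2^m slots 2^m - 1 .. 2^(m+1) - 2;
   slot k lies in block blk k at offset off k. *)
Definition blk k := trunc_log 2 k.+1.
Definition off k := (k.+1 - 2 ^ blk k)%N.

Lemma blk_off m i : (i < 2 ^ m)%N ->
  blk (2 ^ m - 1 + i) = m /\ off (2 ^ m - 1 + i) = i.
Proof.
move=> lt_i; have pos : (0 < 2 ^ m)%N by rewrite expn_gt0.
have e : blk (2 ^ m - 1 + i) = m.
  by apply: trunc_log_eq => //; rewrite expnS; apply/andP; split; lia.
by split=> //; rewrite /off e; lia.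
Qed.

(* Slot k carries mass 2^-m if its offset is below the number cnt m of items
   stored in block m; the mass of the first 2^(M+1) - 1 slots is at most
   sum_{m <= M} cnt m 2^-m. *)
Definition slot_mass (cnt : nat -> nat) (k : nat) : R :=
  if (off k < cnt (blk k))%N then (/ 2) ^ blk k else 0.

Lemma slot_mass_ge0 cnt k : 0 <= slot_mass cnt k.
Proof. by rewrite /slot_mass; case: ifP => _; [apply: pow_le|]; lra. Qed.

Lemma block_mass (cnt : nat -> nat) M :
  sum_f_R0 (slot_mass cnt) (2 ^ M.+1 - 2)%N <=
  sum_f_R0 (fun m => INR (cnt m) * (/ 2) ^ m) M.
Proof.
elim: M => [|M IH].
  rewrite /= /slot_mass /blk /off trunc_log1 /=.
  by case: (cnt 0%N) => [|n]; rewrite Rmult_1_r ?S_INR /=; [lra | have := pos_INR n; lra].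
set P := (2 ^ M.+1)%N in IH *.
have P_ge2 : (2 <= P)%N by rewrite /P expnS; have := expn_gt0 2 M; lia.
have -> : (2 ^ M.+2 - 2 = 2 * P - 2)%N by rewrite expnS.
rewrite (tech2 _ (P - 2) (2 * P - 2)); last by apply/ltP; lia.
rewrite tech5; apply: Rplus_le_compat => //.
have -> : ((2 * P - 2) - S (P - 2))%coq_nat = (P - 1)%N by lia.
rewrite (PartSum.sum_eq _ (fun i => if (i < cnt M.+1)%N then (/ 2) ^ M.+1 else 0)).
  rewrite sum_indicator; apply: Rmult_le_compat_r; first by apply: pow_le; lra.
  by apply: le_INR; apply/leP; apply: geq_minr.
move=> i /leP le_i; have [eb eo] := @blk_off M.+1 i ltac:(rewrite -/P; lia).
by rewrite /slot_mass (_ : (S (P - 2) + i)%coq_nat = (2 ^ M.+1 - 1 + i)%N) ?eb ?eo //; lia.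
Qed.

Lemma rev_revpre (omega : nat -> bool) n : rev (revpre omega n) = mkseq omega n.
Proof. by elim: n => [|n IH] //=; rewrite rev_cons IH /mkseq -addn1 iotaD map_cat cats1. Qed.

Lemma extends_revpre (omega : nat -> bool) n : extends omega (rev (revpre omega n)).
Proof. by move=> k; rewrite rev_revpre size_mkseq => lt_k; rewrite nth_mkseq. Qed.

Section FirstHits.
Variable H : seq bool -> bool.

Fixpoint hit_prob (rs : seq bool) (m : nat) : R :=
  if H rs then 1 else
  match m with
  | 0 => 0
  | m'.+1 => (hit_prob (false :: rs) m' + hit_prob (true :: rs) m') / 2
  end.

Fixpoint first_hits (rs : seq bool) (m : nat) : seq (seq bool) :=
  match m with
  | 0 => if H rs then [:: rs] else [::]
  | m'.+1 => if H rs then [::] else first_hits (false :: rs) m' ++ first_hits (true :: rs) m'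
  end.

Lemma first_hits_mass m rs :
  sum_f_R0 (fun j => INR (size (first_hits rs j)) * (/ 2) ^ j) m = hit_prob rs m.
Proof.
elim: m rs => [|m IH] rs; first by rewrite /=; case: (H rs) => /=; lra.
rewrite decomp_sum; last lia.
rewrite /=; case: (H rs) => /=.
  rewrite (PartSum.sum_eq _ (fun _ => 0)) ?sum_cte; first lra.
  by move=> i _; rewrite /= Rmult_0_l.
rewrite -IH -IH (PartSum.sum_eq _ (fun j => (INR (size (first_hits (false :: rs) j)) * (/ 2) ^ j
   + INR (size (first_hits (true :: rs) j)) * (/ 2) ^ j) * / 2)).
  by rewrite -scal_sum sum_plus; lra.
by move=> i _; rewrite size_cat plus_INR /=; ring.
Qed.

Lemma first_hits_size m rs s : s \in first_hits rs m -> size s = (size rs + m)%N.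
Proof.
elim: m rs => [|m IH] rs /=.
  by case: (H rs); rewrite ?inE // => /eqP ->; rewrite addn0.
by case: (H rs) => //; rewrite mem_cat => /orP [] /IH ->; rewrite /= addSnnS.
Qed.

Lemma first_hits_card m rs : (size (first_hits rs m) <= 2 ^ m)%N.
Proof.
elim: m rs => [|m IH] rs /=; first by case: (H rs).
case: (H rs) => //; rewrite size_cat expnS.
by have := IH (false :: rs); have := IH (true :: rs); lia.
Qed.

Lemma first_hits_complete (omega : nat -> bool) m n :
  H (revpre omega (n + m)) ->
  exists j, revpre omega (n + j) \in first_hits (revpre omega n) j.
Proof.
elim: m n => [|m IH] n.
  by rewrite addn0 => hit; exists 0%N; rewrite addn0 /= hit inE.
move=> hit_later; case hit: (H (revpre omega n)).
  by exists 0%N; rewrite addn0 /= hit inE.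
move: hit_later; rewrite addnS -addSn => /IH [j hj]; exists j.+1.
by rewrite /= hit mem_cat -addSnnS; move: hj => /=; case: (omega n) => ->; rewrite ?orbT.
Qed.

(* The first-hit nodes, read forwards, laid out level by level in the slots of
   the block enumeration; an unused slot k holds a dummy cylinder of length k + L. *)
Definition hit_cylinders (L k : nat) : seq bool :=
  if (off k < size (first_hits [::] (blk k)))%N
  then rev (nth [::] (first_hits [::] (blk k)) (off k))
  else nseq (k + L) false.

Lemma hit_cylinders_cover L (omega : nat -> bool) :
  (exists n, H (revpre omega n)) -> exists k, extends omega (hit_cylinders L k).
Proof.
move=> [n hit].
have [j hj] := @first_hits_complete omega n 0 hit; rewrite add0n in hj.
set i := index (revpre omega j) (first_hits [::] j).
have lt_i : (i < size (first_hits [::] j))%N by rewrite /i index_mem.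
have [eb eo] := @blk_off j i (leq_trans lt_i (first_hits_card _ _)).
exists (2 ^ j - 1 + i)%N.
by rewrite /hit_cylinders eb eo lt_i /i nth_index //; apply: extends_revpre.
Qed.

(* Real cylinders carry at most the hitting probability, dummies at most 2^(1-L). *)
Lemma hit_cylinders_mass (delta : R) L N :
  (forall m, hit_prob [::] m <= delta) ->
  sum_f_R0 (fun k => (/ 2) ^ size (hit_cylinders L k)) N <= delta + 2 * (/ 2) ^ L.
Proof.
move=> hit_le; set cnt := fun m => size (first_hits [::] m).
have split_mass : sum_f_R0 (fun k => (/ 2) ^ size (hit_cylinders L k)) N <=
    sum_f_R0 (slot_mass cnt) N + sum_f_R0 (fun k => (/ 2) ^ k * (/ 2) ^ L) N.
  rewrite -sum_plus; apply: sum_growing => k.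
  rewrite /hit_cylinders /slot_mass /cnt; case: ifP => h.
    rewrite size_rev (@first_hits_size (blk k) [::]) ?mem_nth //= add0n.
    have := Rmult_le_pos _ _ (pow_le (/ 2) k ltac:(lra)) (pow_le (/ 2) L ltac:(lra)).
    lra.
  by rewrite size_nseq pow_add; lra.
have pad_mass : sum_f_R0 (fun k => (/ 2) ^ k * (/ 2) ^ L) N <= 2 * (/ 2) ^ L.
  rewrite -scal_sum tech3; last lra.
  have -> : (1 - (/ 2) ^ N.+1) / (1 - / 2) = 2 * (1 - (/ 2) ^ N.+1) by field.
  by have := pow_le (/ 2) N.+1 ltac:(lra); have := pow_le (/ 2) L ltac:(lra); nra.
have hit_mass : sum_f_R0 (slot_mass cnt) N <= delta.
  have le_N : (N <= 2 ^ N.+1 - 2)%N.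
    by elim: N {split_mass pad_mass} => [|n IHn] //; rewrite !expnS in IHn *; lia.
  apply: Rle_trans (sum_f_R0_mono (slot_mass_ge0 cnt) le_N) _.
  by apply: Rle_trans (block_mass cnt N) _; rewrite /cnt first_hits_mass.
lra.
Qed.

Lemma hitting_cover (delta eps : R) :
  (forall m, hit_prob [::] m <= delta) -> 0 < eps ->
  exists c : nat -> seq bool,
    (forall omega, (exists n, H (revpre omega n)) -> exists k, extends omega (c k)) /\
    (forall N, sum_f_R0 (fun k => (/ 2) ^ size (c k)) N <= delta + eps).
Proof.
move=> hit_le eps_gt0.
have [L small] := pow_lt_1_zero (/ 2) ltac:(rewrite Rabs_right; lra) (eps / 2) ltac:(lra).
have tail_small := small L (le_n _); rewrite Rabs_right in tail_small;
  last by apply: Rle_ge; apply: pow_le; lra.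
exists (hit_cylinders L); split; first exact: hit_cylinders_cover.
by move=> N; have := hit_cylinders_mass L N hit_le; lra.
Qed.

End FirstHits.

Section ZeroOneConvergence.
Variable X : seq bool -> R.
Hypothesis X01 : forall rs, 0 <= X rs <= 1.
Hypothesis X_sub : forall rs, X rs <= (X (false :: rs) + X (true :: rs)) / 2.
Hypothesis X_minus : forall rs, X (false :: rs) = 2 * X rs - X rs * X rs.

Definition energy rs := X rs + X rs * X rs.

Definition drift rs := (energy (false :: rs) + energy (true :: rs)) / 2 - energy rs.

Fixpoint acc_drift (rs : seq bool) : R :=
  if rs is _ :: rs' then acc_drift rs' + drift rs' else 0.

(* 2 d = (sum of increments)(1 + 2X) + (squared increments): the drift is
   nonnegative and dominates the squared steps of X. *)
Lemma drift_controls_steps rs :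
  (X (false :: rs) - X rs) ^ 2 <= 2 * drift rs /\
  (X (true :: rs) - X rs) ^ 2 <= 2 * drift rs.
Proof.
have := X_sub rs; have := X01 rs; rewrite /drift /energy.
set p := X rs; set a := X (false :: rs); set b := X (true :: rs) => p01 sub.
have gain : 0 <= (a - p) + (b - p) by lra.
have split_drift : 2 * ((a + a * a + (b + b * b)) / 2 - (p + p * p)) =
  ((a - p) + (b - p)) * (1 + 2 * p) + (a - p) ^ 2 + (b - p) ^ 2 by field.
rewrite split_drift.
have := Rmult_le_pos _ _ gain (ltac:(lra) : 0 <= 1 + 2 * p).
have := pow2_ge_0 (a - p); have := pow2_ge_0 (b - p).
by split; lra.
Qed.

Lemma drift_ge0 rs : 0 <= drift rs.
Proof.
have [step _] := drift_controls_steps rs.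
by have := pow2_ge_0 (X (false :: rs) - X rs); lra.
Qed.

Lemma acc_drift_ge0 rs : 0 <= acc_drift rs.
Proof. by elim: rs => [|b rs IH] /=; [lra | have := drift_ge0 rs; lra]. Qed.

Definition heavy (K : R) (rs : seq bool) : bool :=
  if Rle_dec K (acc_drift rs) then true else false.

(* Markov bound: 2 - Phi + (accumulated drift) is a nonnegative martingale by
   the definition of the drift, and it is >= K once the path is heavy; so the
   probability of becoming heavy within m steps is at most its value / K. *)
Lemma heavy_hit_bound K m rs : K * hit_prob (heavy K) rs m <= 2 - energy rs + acc_drift rs.
Proof.
have energy02 : forall s, 0 <= energy s <= 2 by move=> s; rewrite /energy; have := X01 s; nra.
elim: m rs => [|m IH] rs /=; rewrite /heavy; case: (Rle_dec K (acc_drift rs)) => h /=.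
- by have := energy02 rs; lra.
- by have := energy02 rs; have := acc_drift_ge0 rs; lra.
- by have := energy02 rs; lra.
- by have := IH (false :: rs); have := IH (true :: rs); rewrite /heavy /= /drift; lra.
Qed.

Lemma light_path_converges (omega : nat -> bool) K :
  (forall n, acc_drift (revpre omega n) < K) ->
  exists l, Un_cv (fun n => X (revpre omega n)) l /\ (l = 0 \/ l = 1).
Proof.
move=> light.
apply: (@zero_one_limit _ (fun n => drift (revpre omega n)) K).
- by move=> n; apply: X01.
- by move=> n; apply: drift_ge0.
- by move=> n /=; case: (drift_controls_steps (revpre omega n)); case: (omega n).
- move=> n; case: (drift_controls_steps (revpre omega n)) => step _.
  by apply: Rle_trans step; right; rewrite X_minus; ring.
- move=> n; apply: Rlt_le; apply: Rle_lt_trans (light n.+1); right.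
  by elim: n => [|n IH] /=; [lra | rewrite IH].
Qed.

(* Combine: paths with unbounded accumulated drift become heavy for K = 4/eps,
   an event of probability <= eps/2, hence coverable with mass <= eps. *)
Lemma zero_one_convergence_as :
  almost_surely (fun omega =>
    exists l, Un_cv (fun n => X (revpre omega n)) l /\ (l = 0 \/ l = 1)).
Proof.
move=> eps eps_gt0.
pose K := 4 / eps.
have K_gt0 : 0 < K by apply: Rdiv_lt_0_compat; lra.
have rarely_heavy : forall m, hit_prob (heavy K) [::] m <= eps / 2.
  move=> m; have := heavy_hit_bound K m [::]; have := X01 [::].
  rewrite /energy /= => ? bound.
  have -> : eps / 2 = 2 / K by rewrite /K; field; lra.
  apply: (Rmult_le_reg_l K) => //; rewrite /Rdiv -Rmult_assoc Rinv_r_simpl_m; nra.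
have [c [covers mass]] := hitting_cover rarely_heavy (ltac:(lra) : 0 < eps / 2).
exists c; split; last by move=> N; have := mass N; lra.
move=> omega not_conv; apply: covers; apply: NNPP => never_heavy.
apply: not_conv; apply: (@light_path_converges omega K) => n.
apply: Rnot_le_lt => heavy_n; apply: never_heavy; exists n.
by rewrite /heavy; case: (Rle_dec K _).
Qed.

End ZeroOneConvergence.

Theorem lemma1 (Y : finType) (W V : bool -> Y -> R)
  (hW : is_BDMC W) (hV : is_BDMC V) :
  (* values in [0,1] *)
  (forall rs : seq bool, 0 <= Xr W V rs <= 1) /\
  (* submartingale: E[X_{n+1} | B_1..B_n] >= X_n *)
  (forall rs : seq bool,
      Xr W V rs <= (Xr W V (false :: rs) + Xr W V (true :: rs)) / 2) /\
  (* a.s. convergence to a limit in {0,1} *)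
  almost_surely (fun omega =>
    exists l, Un_cv (fun n => Xr W V (revpre omega n)) l /\ (l = 0 \/ l = 1)).
Proof.
have X01 : forall rs, 0 <= Xr W V rs <= 1 by move=> rs; exact: Xr_01.
have X_sub : forall rs, Xr W V rs <= (Xr W V (false :: rs) + Xr W V (true :: rs)) / 2.
  by move=> rs; rewrite (Xr_minus V hW); have := Xr_plus V hW rs; lra.
split; first exact: X01.
split; first exact: X_sub.
by apply: zero_one_convergence_as => // rs; apply: Xr_minus.
Qed.
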